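(* For every $c\geq 2$ let $L_c=(1,2,c)$. Then $\lim_{c\to\infty}\rho_{2,L_c}=\frac16$.
   Context: Let $X$ be a finite alphabet with $n\geq 2$ letters and $X^*$ the set of words over $X$; $|v|$ is the length of a word $v$. A code over $X$ is a finite sequence $C=(v_1,\ldots,v_m)$ of words over $X$ such that every $w\in X^*$ has at most one factorization into code-words: if $w=v_{i_1}\cdots v_{i_l}=v_{j_1}\cdots v_{j_{l'}}$ with $l,l'\geq1$, then $l=l'$ and $i_t=j_t$ for all $t$. (Codes are sequences, not sets.) A code $C=(v_1,\ldots,v_m)$ is a prefix code if for all $i,j$, $v_i$ is a prefix of $v_j$ if and only if $i=j$. For a finite sequence $L=(a_1,\ldots,a_m)$ of positive integers, $UD_n(L)$ is the set of all codes $(v_1,\ldots,v_m)$ over an $n$-letter alphabet with $|v_i|=a_i$ for all $i$, $PR_n(L)\subseteq UD_n(L)$ is the subset of prefix codes, and $\rho_{n,L}=|PR_n(L)|/|UD_n(L)|$ (defined when $UD_n(L)\ne\emptyset$). *)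

From HB Require Import structures.
From mathcomp Require Import all_boot all_order all_algebra.
From mathcomp Require Import all_classical all_reals all_analysis.

Set Implicit Arguments.
Unset Strict Implicit.
Unset Printing Implicit Defensive.

Import Order.TTheory GRing.Theory Num.Theory.

Definition is_code (n m : nat) (v : 'I_m -> seq 'I_n) : Prop :=
  forall s t : seq 'I_m, s != [::] -> t != [::] ->
    flatten (map v s) = flatten (map v t) -> s = t.

Definition is_prefix_code (n m : nat) (v : 'I_m -> seq 'I_n) : Prop :=
  forall i j : 'I_m, prefix (v i) (v j) = (i == j).

Definition words_of_lengths (n : nat) (L : seq nat) : finType :=
  {dffun forall i : 'I_(size L), (nth 0 L i).-tuple 'I_n}.

Definition as_words (n : nat) (L : seq nat) (f : words_of_lengths n L) :
  'I_(size L) -> seq 'I_n := fun i => val (f i).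

Definition UD (n : nat) (L : seq nat) : {set words_of_lengths n L} :=
  [set f | `[< is_code (as_words f) >] ].

Definition PR (n : nat) (L : seq nat) : {set words_of_lengths n L} :=
  [set f | `[< is_code (as_words f) >] && `[< is_prefix_code (as_words f) >] ].

Definition rho (R : fieldType) (n : nat) (L : seq nat) : R :=
  (#|PR n L|%:R / #|UD n L|%:R)%R.

(* rho_{2,(1,2,c)} -> 1/6. A code of lengths (1, 2, c) is (x, y e, w) with
   letters x, y, e and |w| = c.
   - Prefix codes are counted exactly: for c >= 3 there are 2^c of them
     (x <> y, and w starts with y followed by the letter other than e).
   - The triples x = y = e never give a code; for the six other triples all
     but O((7/4)^c) words w give a code. Synchronization: if y <> x and the
     greedy parse of w into x and the words a e (a <> x) fails at position k,
     then the same parse of any factorized word fails exactly k letters after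
     the first occurrence of w, which pins down the factorization; the case
     y = x reduces to this by reversing all words. The parsable words obey a
     Fibonacci recursion. Hence 6 2^c - O((7/4)^c) <= #UD <= 6 2^c.
   - So 1/6 <= rho <= 1/6 + 16 (7/8)^c for c >= 3 and the limit follows by
     squeezing. *)

From HB Require Import structures.
From mathcomp Require Import all_boot all_order all_algebra.
From mathcomp Require Import all_classical all_reals all_analysis.
From mathcomp Require Import zify ring lra.
Import Order.TTheory GRing.Theory Num.Theory numFieldNormedType.Exports.
Set Implicit Arguments.
Unset Strict Implicit.
Unset Printing Implicit Defensive.

Lemma is_code_ext n m (v v' : 'I_m -> seq 'I_n) : v =1 v' -> is_code v -> is_code v'.
Proof. by move=> vv' code_v s t s0 t0; rewrite -!(eq_map vv'); apply: code_v. Qed.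

Lemma is_code_rev n m (v : 'I_m -> seq 'I_n) :
  is_code (fun i => rev (v i)) -> is_code v.
Proof.
have flatten_revE s : rev (flatten (map v s)) = flatten (map (fun i => rev (v i)) (rev s)).
  by rewrite rev_flatten -!map_rev -map_comp.
move=> code_rv s t s0 t0 st; apply: (can_inj revK); apply: code_rv.
- by rewrite -size_eq0 size_rev size_eq0.
- by rewrite -size_eq0 size_rev size_eq0.
by rewrite -!flatten_revE st.
Qed.

Lemma is_code_first_factor n m (v : 'I_m -> seq 'I_n) :
  (forall i, v i != [::]) ->
  (forall i j s t, v i ++ flatten (map v s) = v j ++ flatten (map v t) -> i = j) ->
  is_code v.
Proof.
move=> v_nil first s t _ _; elim: s t => [|i s IH] [|j t] //=.
- by move/esym/(congr1 size); rewrite size_cat; case: (v j) (v_nil j).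
- by move/(congr1 size); rewrite size_cat; case: (v i) (v_nil i).
move=> st; have eq_ij := first _ _ _ _ st; subst j.
by rewrite (IH t) //; move/(congr1 (drop (size (v i)))): st; rewrite !drop_size_cat.
Qed.

(* A prefix code of nonempty words is uniquely decodable: of two factorizations
   of the same word, one first factor is a prefix of the other, hence they agree. *)
Lemma prefix_code_is_code n m (v : 'I_m -> seq 'I_n) :
  (forall i, v i != [::]) -> is_prefix_code v -> is_code v.
Proof.
move=> v_nil pcode; apply: is_code_first_factor => // i j s t st.
have prefix_cat (a b c d : seq 'I_n) : a ++ b = c ++ d -> size a <= size c -> prefix a c.
  by move=> abcd ac; rewrite prefixE -(takel_cat d ac) -abcd take_size_cat.
apply/eqP; case: (leqP (size (v i)) (size (v j))) => [ij | /ltnW ji].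
  by rewrite -pcode (prefix_cat _ _ _ _ st).
by rewrite eq_sym -pcode (prefix_cat _ _ _ _ (esym st)).
Qed.

Section ThreeWordCodes.
Variable n : nat.
Implicit Types (x y e : 'I_n) (w z : seq 'I_n).

Definition code3 x y e w : 'I_3 -> seq 'I_n :=
  fun i => nth [::] [:: [:: x]; [:: y; e]; w] i.

Definition is_long (i : 'I_3) : bool := val i == 2.

(* [scan x e false z] reads z greedily as a concatenation of the word x and of
   two-letter words a e with a <> x; [pending] records that the last letter
   read is such an a. It returns the position of the first letter at which
   this reading is impossible, and [None] if z is a prefix of such a
   concatenation. *)
Fixpoint scan x e (pending : bool) z : option nat :=
  match z with
  | [::] => None
  | u :: z' =>
      if pending then (if u == e then omap S (scan x e false z') else Some 0)
      else omap S (scan x e (u != x) z')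
  end.

Lemma scan_cat x e p z z' k : scan x e p z = Some k -> scan x e p (z ++ z') = Some k.
Proof.
elim: z p k => [|u z IH] [] k //=; first case: (u == e) => //.
all: by case E: (scan _ _ _ z) => [k'|] //= [<-]; rewrite (IH _ _ E).
Qed.

Lemma scan_flatten_code3 x y e w k (s : seq 'I_3) :
  y != x -> scan x e false w = Some k ->
  scan x e false (flatten (map (code3 x y e w) s)) =
  if has is_long s then
    Some (size (flatten (map (code3 x y e w) (take (find is_long s) s))) + k)
  else None.
Proof.
move=> yx scan_w; elim: s => [|[[|[|[|i]]] Hi] s IH] //=.
- by rewrite eqxx /= IH; case: has.
- by rewrite (negbTE yx) /= eqxx /= IH; case: has.
- by rewrite (scan_cat _ scan_w).
Qed.

Lemma scan_code3_head x y e w k (s : seq 'I_3) :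
  y != x -> scan x e false w = Some k ->
  (scan x e false (flatten (map (code3 x y e w) s)) == Some k) = is_long (head ord0 s).
Proof.
move=> yx scan_w; rewrite (scan_flatten_code3 _ yx scan_w).
case: s => [|[[|[|[|i]]] Hi] s] //=; case: (has is_long s) => //=.
all: rewrite /is_long /= ?add0n ?eqxx //.
all: by apply/negbTE/eqP => -[]; lia.
Qed.

Lemma code3_is_code_scan x y e w k :
  y != x -> scan x e false w = Some k -> is_code (code3 x y e w).
Proof.
move=> yx scan_w; have w0 : w != [::] by case: w scan_w.
apply: is_code_first_factor => [[[|[|[|i]]] Hi]|] //= i j s t st.
have long_ij : is_long i = is_long j.
  have := scan_code3_head (i :: s) yx scan_w; rewrite /= st.
  by rewrite (scan_code3_head (j :: t) yx scan_w).
case: i j st long_ij => [[|[|[|i]]] Hi] // [[|[|[|j]]] Hj] //= st _.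
all: try exact: val_inj.
all: by case: st => /eqP; rewrite ?(negbTE yx) // eq_sym (negbTE yx).
Qed.

(* Mirror criterion for (x, x e, w), applied to the reversed code (x, e x, rev w). *)
Lemma code3_is_code_rev x e w k :
  e != x -> scan x x false (rev w) = Some k -> is_code (code3 x x e w).
Proof.
move=> ex scan_rw; apply: is_code_rev.
apply: (@is_code_ext _ _ (code3 x e x (rev w))); first by case=> [[|[|[|i]]] Hi].
exact: code3_is_code_scan ex scan_rw.
Qed.

(* (x, x x, w) is never a code: the word x x has two factorizations. *)
Lemma code3_not_code x w : ~ is_code (code3 x x x w).
Proof. by move/(_ [:: ord0; ord0] [:: Ordinal (isT : 1 < 3)] isT isT erefl). Qed.

Lemma code3_prefix_code x y e w : 2 < size w ->
  is_prefix_code (code3 x y e w) <->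
  [&& x != y, ~~ prefix [:: x] w & ~~ prefix [:: y; e] w].
Proof.
move=> w3; have [w_x w_ye] : ~~ prefix w [:: x] /\ ~~ prefix w [:: y; e].
  by split; apply/negP => /size_prefix /=; lia.
split=> [pcode | /and3P[xy xw yew]].
  have := pcode (@Ordinal 3 0 isT) (@Ordinal 3 1 isT).
  have := pcode (@Ordinal 3 0 isT) (@Ordinal 3 2 isT).
  have := pcode (@Ordinal 3 1 isT) (@Ordinal 3 2 isT).
  by rewrite /= andbT => -> -> ->.
move=> i j; apply/idP/eqP => [|<-]; last exact: prefix_refl.
by apply: contraTeq; case: i j => [[|[|[|i]]] Hi] // [[|[|[|j]]] Hj] //= _; rewrite ?andbT ?andbF.
Qed.

(* As prefix codes of nonempty words are codes, membership in PR is that condition. *)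
Lemma code3_prefix_codeE x y e w : 2 < size w ->
  `[< is_code (code3 x y e w) >] && `[< is_prefix_code (code3 x y e w) >] =
  [&& x != y, ~~ prefix [:: x] w & ~~ prefix [:: y; e] w].
Proof.
move=> w3; apply/andP/idP => [[_ /asboolP /(code3_prefix_code _ _ _ w3)] //|].
move=> /(code3_prefix_code _ _ _ w3) pcode; split; apply/asboolP => //.
by apply: prefix_code_is_code pcode => -[[|[|[|i]]] Hi] //=; case: w w3.
Qed.

End ThreeWordCodes.

Lemma sum_tuple_cons (T : finType) k (F : k.+1.-tuple T -> nat) :
  \sum_(t : k.+1.-tuple T) F t = \sum_(a : T) \sum_(t : k.-tuple T) F [tuple of a :: t].
Proof.
rewrite pair_bigA (reindex (fun p : T * k.-tuple T => [tuple of p.1 :: p.2])) //.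
exists (fun t => (thead t, behead_tuple t)) => [[a t]|t] _ /=.
  by rewrite theadE; congr pair; apply: val_inj.
by rewrite [RHS]tuple_eta; apply: val_inj.
Qed.

Lemma sum_I2 (F : 'I_2 -> nat) : \sum_(a : 'I_2) F a = F ord0 + F ord_max.
Proof. by rewrite big_ord_recr big_ord1; congr (F _ + _); apply: val_inj. Qed.

Lemma I2_cases (a : 'I_2) : a = ord0 \/ a = ord_max.
Proof. by case: a => [[|[|a]] Ha]; [left|right|]; try apply: val_inj. Qed.

Lemma card_binary_tuples k : #|{: k.-tuple 'I_2}| = 2 ^ k.
Proof. by rewrite card_tuple card_ord. Qed.

(* Number of binary words of length k that [scan] reads without failure; over
   a binary alphabet these words are counted by a Fibonacci recursion. *)
Definition unscannable (x e : 'I_2) (pending : bool) (k : nat) : nat :=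
  \sum_(t : k.-tuple 'I_2) (scan x e pending t == None : nat).

Lemma unscannable_le x e p k : unscannable x e p k <= 2 ^ k.
Proof.
rewrite -card_binary_tuples -sum1_card.
by apply: leq_sum => t _; case: (_ == _).
Qed.

(* After a pending letter a, the next letter must be e. *)
Lemma unscannable_pending x e k : unscannable x e true k.+1 = unscannable x e false k.
Proof.
rewrite /unscannable sum_tuple_cons (bigD1 e) //= eqxx [X in _ + X]big1 ?addn0 => [|a ae].
  by apply: eq_bigr => t _; case: scan.
by rewrite big1 // => t _ /=; rewrite (negbTE ae).
Qed.

(* Without a pending letter, the next one is x (nothing pending) or the other
   letter (which becomes pending). *)
Lemma unscannable_idle x e k :
  unscannable x e false k.+1 = unscannable x e false k + unscannable x e true k.
Proof.
rewrite /unscannable sum_tuple_cons (bigD1 x) //= eqxx /=; congr addn.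
  by apply: eq_bigr => t _; case: scan.
rewrite (eq_bigr (fun _ => unscannable x e true k)) => [|a ax].
  by rewrite sum_nat_const cardC1 card_ord mul1n.
by rewrite ax; apply: eq_bigr => t _; case: scan.
Qed.

(* Fibonacci growth is slower than (7/4)^k: 4^k u_k <= 2 7^k, proved for two
   consecutive k at a time using u_(k+2) = u_(k+1) + u_k. *)
Lemma unscannable_bound x e k : 4 ^ k * unscannable x e false k <= 2 * 7 ^ k.
Proof.
suff: 4 ^ k * unscannable x e false k <= 2 * 7 ^ k /\
      4 ^ k.+1 * unscannable x e false k.+1 <= 2 * 7 ^ k.+1 by case.
elim: k => [|k [IHk IHk1]].
  have := unscannable_le x e false 0; have := unscannable_le x e false 1.
  by rewrite !expn0 !expn1 !mul1n; lia.
split=> //; rewrite unscannable_idle unscannable_pending mulnDr.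
by move: IHk IHk1; rewrite !expnS; nia.
Qed.

(* Words whose mirror image is parsable are counted alike (reversal is a
   bijection on tuples); needed for the codes (x, x e, w). *)
Lemma unscannable_rev x e k :
  \sum_(t : k.-tuple 'I_2) (scan x e false (rev t) == None : nat) = unscannable x e false k.
Proof.
rewrite /unscannable (reindex (fun t : k.-tuple 'I_2 => rev_tuple t)) /=.
  by apply: eq_bigr => t _; rewrite revK.
by exists (fun t => rev_tuple t) => t _; apply: val_inj; rewrite /= revK.
Qed.

Definition config (c : nat) : finType := ('I_2 * 'I_2 * 'I_2 * c.-tuple 'I_2)%type.

Definition config_code c (p : config c) : 'I_3 -> seq 'I_2 :=
  code3 p.1.1.1 p.1.1.2 p.1.2 (val p.2).

Definition config_words c (p : config c) : words_of_lengths 2 [:: 1; 2; c] :=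
  @finfun _ (fun i : 'I_3 => (nth 0 [:: 1; 2; c] i).-tuple 'I_2)
    (fun i => insubd (nseq_tuple _ ord0) (config_code p i)).

Lemma config_wordsE c (p : config c) : as_words (config_words p) = config_code p.
Proof.
apply/funext => i; rewrite /as_words ffunE val_insubd.
by case: p => [[[x y] e] w]; case: i => [[|[|[|i]]] Hi] //=; rewrite size_tuple eqxx.
Qed.

(* Injective between sets of equal size 2^(c+3), hence bijective. *)
Lemma config_words_bij c : bijective (@config_words c).
Proof.
apply: inj_card_bij => [[[[x y] e] w] [[[x' y'] e'] w'] /(congr1 (@as_words 2 _))|].
  rewrite !config_wordsE => eq_code.
  have := congr1 (fun v => v (@Ordinal 3 0 isT)) eq_code.
  have := congr1 (fun v => v (@Ordinal 3 1 isT)) eq_code.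
  have := congr1 (fun v => v (@Ordinal 3 2 isT)) eq_code.
  by rewrite /config_code /= => /val_inj -> [-> ->] [->].
rewrite card_dep_ffun /image_mem !card_prod !card_tuple !card_ord.
rewrite [X in foldr _ _ X](eq_map (fun i => card_tuple _ _)) card_ord.
by rewrite enum_ordSl enum_ordSl enum_ordSl enum_ord0 /= muln1 -!expnD add2n add1n !expnS !mulnA.
Qed.

Definition sum3 (F : 'I_2 -> 'I_2 -> 'I_2 -> nat) : nat :=
  \sum_(x : 'I_2) \sum_(y : 'I_2) \sum_(e : 'I_2) F x y e.

Lemma leq_sum3 (F G : 'I_2 -> 'I_2 -> 'I_2 -> nat) :
  (forall x y e, F x y e <= G x y e) -> sum3 F <= sum3 G.
Proof. by move=> FG; do 3!apply: leq_sum => ? _. Qed.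

Lemma sum3D (F G : 'I_2 -> 'I_2 -> 'I_2 -> nat) :
  sum3 (fun x y e => F x y e + G x y e) = sum3 F + sum3 G.
Proof.
rewrite /sum3 -big_split; apply: eq_bigr => x _.
by rewrite -big_split; apply: eq_bigr => y _; rewrite big_split.
Qed.

Lemma sum3Mr (a : nat) (F : 'I_2 -> 'I_2 -> 'I_2 -> nat) :
  a * sum3 F = sum3 (fun x y e => a * F x y e).
Proof.
rewrite /sum3 big_distrr; apply: eq_bigr => x _.
by rewrite big_distrr; apply: eq_bigr => y _; rewrite big_distrr.
Qed.

Lemma sum3_const (a : nat) : sum3 (fun _ _ _ => a) = 8 * a.
Proof. by rewrite /sum3 !sum_I2; lia. Qed.

Lemma card_words_pred c (P : ('I_3 -> seq 'I_2) -> bool) :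
  #|[set f : words_of_lengths 2 [:: 1; 2; c] | P (as_words f)]| =
  sum3 (fun x y e => \sum_(w : c.-tuple 'I_2) P (code3 x y e w)).
Proof.
rewrite /sum3 -sum1_card big_mkcond (reindex (@config_words c)) /=; last first.
  exact/onW_bij/config_words_bij.
rewrite !pair_big; apply: eq_bigr => p _.
by rewrite inE config_wordsE; case: P.
Qed.

(* For |w| >= 3 the prefix condition only involves the first two letters of w:
   given x <> y, w must start with y followed by the letter other than e. *)
Lemma prefix3_count k (x y e : 'I_2) :
  \sum_(w : k.+3.-tuple 'I_2) [&& x != y, ~~ prefix [:: x] w & ~~ prefix [:: y; e] w] =
  (x != y) * 2 ^ k.+1.
Proof.
have tail_free z1 z2 : \sum_(r : k.+1.-tuple 'I_2)
    [&& x != y, ~~ prefix [:: x] [:: z1, z2 & r] & ~~ prefix [:: y; e] [:: z1, z2 & r]] =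
    [&& x != y, x != z1 & ~~ ((y == z1) && (e == z2))] * 2 ^ k.+1.
  under eq_bigr => r _ do rewrite !prefix_cons !prefix0s !andbT.
  by rewrite sum_nat_const card_tuple card_ord mulnC.
rewrite sum_tuple_cons (eq_bigr _ (fun z1 _ =>
  etrans (sum_tuple_cons _) (eq_bigr _ (fun z2 _ => tail_free z1 z2)))).
rewrite !sum_I2.
by case: (I2_cases x) (I2_cases y) (I2_cases e) => -> [] -> [] ->; rewrite /= ?muln0 ?addn0.
Qed.

Lemma card_PR k : #|PR 2 [:: 1; 2; k.+3]| = 2 ^ k.+3.
Proof.
have w3 (w : k.+3.-tuple 'I_2) : 2 < size w by rewrite size_tuple.
rewrite /PR (card_words_pred _ (fun v => `[< is_code v >] && `[< is_prefix_code v >])) /sum3.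
under eq_bigr => x _ do under eq_bigr => y _ do under eq_bigr => e _ do
  under eq_bigr => w _ do rewrite (code3_prefix_codeE x y e (w3 w)).
under eq_bigr => x _ do under eq_bigr => y _ do under eq_bigr => e _ do
  rewrite prefix3_count.
by rewrite !sum_I2 /= !expnS; lia.
Qed.

Definition codes3 c (x y e : 'I_2) : nat :=
  \sum_(w : c.-tuple 'I_2) (`[< is_code (code3 x y e w) >] : nat).

Lemma card_UD c : #|UD 2 [:: 1; 2; c]| = sum3 (codes3 c).
Proof. exact: (card_words_pred c (fun v => `[< is_code v >])). Qed.

Definition degenerate (x y e : 'I_2) : bool := (y == x) && (e == x).

Lemma sum3_nondegenerate (a : nat) : sum3 (fun x y e => ~~ degenerate x y e * a) = 6 * a.
Proof. by rewrite /sum3 !sum_I2 /=; lia. Qed.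

(* Upper bound on the number of non-codes for a non-degenerate triple, given by
   the synchronization criterion (read w directly if y <> x, reversed if y = x). *)
Definition defect c (x y e : 'I_2) : nat :=
  unscannable x (if y == x then x else e) false c.

Lemma card_le_sum_cover (T : finType) (P Q : pred T) :
  (forall t, ~~ Q t -> P t) -> #|T| <= \sum_(t : T) P t + \sum_(t : T) Q t.
Proof.
move=> QP; rewrite -big_split -sum1_card; apply: leq_sum => t _.
by case: (Q t) (QP t) => [_|/(_ isT) ->]; rewrite /= ?addn1.
Qed.

Lemma codes3_le c x y e : codes3 c x y e <= ~~ degenerate x y e * 2 ^ c.
Proof.
rewrite /codes3 /degenerate; case: eqP => [->|_]; first case: eqP => [->|_].
- by rewrite big1 // => w _; case: asboolP => // /code3_not_code.
all: rewrite mul1n -card_binary_tuples -sum1_card.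
all: by apply: leq_sum => w _; case: asboolP.
Qed.

Lemma codes3_ge c x y e :
  ~~ degenerate x y e * 2 ^ c <= codes3 c x y e + defect c x y e.
Proof.
rewrite /codes3 /degenerate /defect -card_binary_tuples.
case: eqP => [->|/eqP yx]; first case: eqP => [->|/eqP ex] //.
- rewrite mul1n -unscannable_rev; apply: card_le_sum_cover => w.
  case E: (scan x x false (rev w)) => [k|] // _.
  by apply/asboolP; exact: code3_is_code_rev ex E.
- rewrite mul1n; apply: card_le_sum_cover => w.
  case E: (scan x e false w) => [k|] // _.
  by apply/asboolP; exact: code3_is_code_scan yx E.
Qed.

Definition total_defect c : nat := sum3 (defect c).

Lemma card_UD_bounds c :
  #|UD 2 [:: 1; 2; c]| <= 6 * 2 ^ c <= #|UD 2 [:: 1; 2; c]| + total_defect c.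
Proof.
rewrite card_UD /total_defect -sum3_nondegenerate -sum3D.
by apply/andP; split; apply: leq_sum3 => x y e; [exact: codes3_le | exact: codes3_ge].
Qed.

Lemma total_defect_bound c : 4 ^ c * total_defect c <= 16 * 7 ^ c.
Proof.
rewrite sum3Mr (_ : 16 * 7 ^ c = 8 * (2 * 7 ^ c)); last by rewrite mulnA.
rewrite -sum3_const.
by apply: leq_sum3 => x y e; exact: unscannable_bound.
Qed.

Lemma card_PR_le_UD n L : #|PR n L| <= #|UD n L|.
Proof. by apply/subset_leq_card/fintype.subsetP => f; rewrite !inE => /andP[/asboolP]. Qed.

Local Open Scope classical_set_scope.
Local Open Scope ring_scope.

Lemma ratio_squeeze (R : realFieldType) (p U D : R) :
  0 < p -> p <= U -> U <= 6 * p -> 6 * p <= U + D -> 6^-1 <= p / U <= 6^-1 + D / p.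
Proof.
move=> p0 pU U6p Dlow; have U0 : 0 < U by exact: lt_le_trans pU.
apply/andP; split; first by rewrite ler_pdivlMr //; lra.
have D0 : 0 <= D by lra.
have DUp : D <= D * (U / p) by rewrite ler_peMr // ler_pdivlMr // mul1r.
by rewrite ler_pdivrMr // mulrDl mulrAC -mulrA; lra.
Qed.

Lemma defect_ratio (R : realFieldType) c :
  (total_defect c)%:R / (2 ^ c)%:R <= 16 * (7 / 8) ^+ c :> R.
Proof.
have p0 : (0 : R) < (2 ^ c)%:R by rewrite ltr0n expn_gt0.
have q0 : (0 : R) < (4 ^ c)%:R by rewrite ltr0n expn_gt0.
rewrite ler_pdivrMr // -(ler_pM2l q0).
have -> : (4 ^ c)%:R * (16 * (7 / 8) ^+ c * (2 ^ c)%:R) = (16 * 7 ^ c)%N%:R :> R.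
  have seven : (4 * (7 / 8) * 2 : R) = 7 by lra.
  by rewrite natrM !natrX -[X in _ = _ * X ^+ _]seven !exprMn; ring.
by rewrite -natrM ler_nat total_defect_bound.
Qed.

Lemma rho_bounds (R : realFieldType) k :
  6^-1 <= rho R 2 [:: 1%N; 2%N; k.+3] <= 6^-1 + 16 * (7 / 8) ^+ k.+3.
Proof.
have /andP[UD_le UD_ge] := card_UD_bounds k.+3.
have := card_PR_le_UD 2 [:: 1%N; 2%N; k.+3]; rewrite card_PR => PR_le.
have /andP[-> rho_le] : 6^-1 <= rho R 2 [:: 1%N; 2%N; k.+3] <=
    6^-1 + (total_defect k.+3)%:R / (2 ^ k.+3)%:R.
  rewrite /rho card_PR; apply: ratio_squeeze; rewrite ?ltr0n ?expn_gt0 //.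
  - by rewrite ler_nat.
  - by rewrite -natrM ler_nat.
  - by rewrite -natrM -natrD ler_nat.
by apply: (le_trans rho_le); rewrite lerD2l defect_ratio.
Qed.

Theorem theorem6 (R : realType) :
  rho R 2 [:: 1%N; 2%N; c] @[c --> \oo] --> ((6%:R : R)^-1).
Proof.
apply: (@squeeze_cvgr _ _ _ _ (cst 6^-1) (fun c => 6^-1 + 16 * (7 / 8) ^+ c)).
- near=> c; have c3 : (3 <= c)%N by near: c; exact: nbhs_infty_ge.
  by rewrite -(subnK c3) addn3; exact: rho_bounds.
- exact: cvg_cst.
- rewrite -[X in _ --> X]addr0; apply: cvgD; first exact: cvg_cst.
  rewrite -(mulr0 16); apply: cvgM; first exact: cvg_cst.
  apply: cvg_expr; by rewrite ger0_norm ?divr_ge0 // ltr_pdivrMr // mul1r ltr_nat.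
Unshelve. all: by end_near.
Qed.
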